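(* Let $G=(V,E)$ be a finite graph (parallel edges and loops allowed), $e\neq f$ edges of $G$, and $E^{ef}=E\setminus\{e,f\}$. For each paracel $\gamma\subseteq E^{ef}$ there is exactly one choice of a subset $\beta\subseteq E^{ef}$ disjoint from $\gamma$ and a monomial $\mathbf{m}\in B_{\beta,\gamma}$ such that $\mathbf{x}^{\beta}\mathbf{x}^{\gamma}\mathbf{m}=\prod_{g\in E^{ef}}x_g$.
   Context: For $F\subseteq E$, $\mathbf{x}^F=\prod_{g\in F}x_g$ and $k(F)$ is the number of connected components of the spanning subgraph $(V,F)$. A subset $F\subseteq E^{ef}$ is a paracel if $e$ and $f$ both join the same two distinct connected components of $(V,F)$; equivalently $(V,F+e)$ and $(V,F+f)$ have the same connected components and $k(F+e)=k(F+f)=k(F)-1$. For a paracel $F$, an edge of $E^{ef}\setminus F$ is a smoot for $F$ if it joins the same two components of $(V,F)$ as $e$ and $f$. For disjoint $\beta,\gamma\subseteq E^{ef}$, a subset $\alpha\subseteq E^{ef}$ is compatible with $\beta,\gamma$ if $\alpha$ is disjoint from $\beta$ and $\gamma$, $\gamma\cup\alpha$ is a paracel, and every edge of $\beta$ is a smoot for $\gamma\cup\alpha$; $A_{\beta,\gamma}$ is the set of compatible $\alpha$. Elements $\alpha,\alpha'\in A_{\beta,\gamma}$ (possibly equal) are twins if $\alpha\cap\alpha'\in A_{\beta,\gamma}$, and $B_{\beta,\gamma}$ is the set of distinct monomials $\mathbf{x}^{\alpha}\mathbf{x}^{\alpha'}$ with $\alpha,\alpha'$ twins in $A_{\beta,\gamma}$.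 *)

From mathcomp Require Import all_boot.
Set Implicit Arguments. Unset Strict Implicit. Unset Printing Implicit Defensive.

(* A finite multigraph G = (V, E): V, E finite types, [ends g] = the two
   endpoints of edge g (loops: both equal; parallel edges: same ends). *)
Section Paracel.
Variables (V E : finType) (ends : E -> V * V).

Definition adj (F : {set E}) : rel V :=
  fun u v => [exists g in F, (ends g == (u, v)) || (ends g == (v, u))].

Definition samecomp (F : {set E}) (u v : V) : bool := connect (adj F) u v.

Definition joins_same (F : {set E}) (g h : E) : bool :=
  (samecomp F (ends g).1 (ends h).1 && samecomp F (ends g).2 (ends h).2) ||
  (samecomp F (ends g).1 (ends h).2 && samecomp F (ends g).2 (ends h).1).

Variables e f : E.

Definition Eef : {set E} := [set g | (g != e) && (g != f)].

Definition paracel (F : {set E}) : bool :=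
  [&& F \subset Eef, ~~ samecomp F (ends e).1 (ends e).2 & joins_same F f e].

Definition smoot (F : {set E}) (g : E) : bool :=
  [&& g \in Eef, g \notin F & joins_same F g e].

Definition compatible (beta gamma alpha : {set E}) : bool :=
  [&& alpha \subset Eef, [disjoint alpha & beta], [disjoint alpha & gamma],
      paracel (gamma :|: alpha) & [forall g in beta, smoot (gamma :|: alpha) g]].

(* monomials in the variables x_g (g in E) are represented by their exponent
   vectors; x^F is the indicator of F *)
Definition xmon (F : {set E}) : {ffun E -> nat} := [ffun g => (g \in F : nat)].
Definition mmul (m1 m2 : {ffun E -> nat}) : {ffun E -> nat} :=
  [ffun g => m1 g + m2 g].

Definition twins (beta gamma alpha alpha' : {set E}) : Prop :=
  [/\ compatible beta gamma alpha, compatible beta gamma alpha'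
    & compatible beta gamma (alpha :&: alpha')].

Definition inB (beta gamma : {set E}) (m : {ffun E -> nat}) : Prop :=
  exists alpha alpha', twins beta gamma alpha alpha' /\
                       m = mmul (xmon alpha) (xmon alpha').
End Paracel.

From mathcomp Require Import all_boot.

(* Let A and B be the components of (V, gamma) containing the two ends of e.
   The multiplier beta is forced to be the set of smoots of gamma, and the
   remaining edges R of E^{ef} must be split into twins alpha, alpha' with
   alpha ∩ alpha' = ∅, neither of which reconnects A to B.  Such a split
   exists: grow gamma by the edges of R avoiding B, let X be the component of
   A in the result, and put into alpha the edges of R with both ends in X.
   Then gamma ∪ alpha stays inside X, which misses B; and an edge of
   alpha' leaving A would end either in B (so it would be a smoot) or outside
   B (so it would lie in X, hence in alpha).  Uniqueness is read off the
   exponents: every variable of E^{ef} occurs exactly once in the product. *)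

Set Implicit Arguments.
Unset Strict Implicit.
Unset Printing Implicit Defensive.

Section Components.
Variables (V E : finType) (ends : E -> V * V).
Implicit Types (F : {set E}) (g h : E) (u v : V).

Lemma adj_sym F : symmetric (adj ends F).
Proof.
by move=> u v; apply/existsP/existsP => -[g /andP[gF uv]]; exists g; rewrite gF orbC.
Qed.

Lemma samecomp_sym F u v : samecomp ends F u v = samecomp ends F v u.
Proof. exact/sym_connect_sym/adj_sym. Qed.

Lemma samecomp_edge F g : g \in F -> samecomp ends F (ends g).1 (ends g).2.
Proof.
by move=> gF; apply/connect1/existsP; exists g; rewrite gF -surjective_pairing eqxx.
Qed.

Lemma samecomp_sub F F' u v :
  F \subset F' -> samecomp ends F u v -> samecomp ends F' u v.
Proof.
move=> sFF'; apply: connect_sub => x y /existsP[g /andP[gF xy]].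
by apply/connect1/existsP; exists g; rewrite (subsetP sFF' _ gF).
Qed.

Lemma joins_same_sub F F' g h :
  F \subset F' -> joins_same ends F g h -> joins_same ends F' g h.
Proof.
by move=> sFF' /orP[]/andP[c1 c2]; apply/orP; [left|right];
  rewrite !(samecomp_sub sFF').
Qed.

Lemma samecomp_closed (P : pred V) F u v :
  (forall g, g \in F -> P (ends g).1 = P (ends g).2) ->
  samecomp ends F u v -> P u = P v.
Proof.
move=> PF; apply: closed_connect => x y /existsP[g /andP[/PF Pg]].
by case/orP => /eqP eg; rewrite eg /= in Pg.
Qed.

Lemma samecomp_edge_eq F u g :
  g \in F -> samecomp ends F u (ends g).1 = samecomp ends F u (ends g).2.
Proof.
move=> gF; have g12 := samecomp_edge gF.
have g21 : samecomp ends F (ends g).2 (ends g).1 by rewrite samecomp_sym.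
by apply/idP/idP => c; [exact: connect_trans c g12 | exact: connect_trans c g21].
Qed.

Lemma joins_same_samecomp F g h :
  g \in F -> joins_same ends F g h -> samecomp ends F (ends h).1 (ends h).2.
Proof.
move=> gF; have g12 := samecomp_edge gF.
have g21 : samecomp ends F (ends g).2 (ends g).1 by rewrite samecomp_sym.
case/orP => /andP[c1 c2].
- by rewrite samecomp_sym in c1; exact: connect_trans (connect_trans c1 g12) c2.
- by rewrite samecomp_sym in c2; exact: connect_trans (connect_trans c2 g21) c1.
Qed.

End Components.

Section Monomials.
Variable E : finType.
Implicit Types (A B : {set E}) (m : {ffun E -> nat}).

Lemma mmulI m : injective (mmul m).
Proof.
move=> m1 m2 /ffunP m12; apply/ffunP => g.
by have := m12 g; rewrite !ffunE; apply: addnI.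
Qed.

Lemma xmonU A B : [disjoint A & B] -> mmul (xmon A) (xmon B) = xmon (A :|: B).
Proof.
move/pred0P => AB0; apply/ffunP => g; have := AB0 g; rewrite /= !ffunE inE.
by case: (g \in A); case: (g \in B).
Qed.

Lemma xmon_subD A B : A \subset B -> mmul (xmon A) (xmon (B :\: A)) = xmon B.
Proof.
move/subsetP => sAB.
rewrite xmonU; last by apply/pred0P => g /=; rewrite inE andbA andbN.
congr xmon; apply/setP => g; rewrite !inE.
by case: (boolP (g \in A)) => [/sAB ->|].
Qed.

End Monomials.

Section Proposition.
Variables (V E : finType) (ends : E -> V * V) (e f : E) (gamma : {set E}).

Local Notation e1 := (ends e).1.
Local Notation e2 := (ends e).2.
Local Notation comp1 := (samecomp ends gamma e1).
Local Notation comp2 := (samecomp ends gamma e2).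

Definition smoots := [set g | smoot ends e f gamma g].

Definition rest := Eef e f :\: (smoots :|: gamma).

Definition gamma_ext :=
  gamma :|: [set g in rest | ~~ comp2 (ends g).1 && ~~ comp2 (ends g).2].

Local Notation reach := (samecomp ends gamma_ext e1).

Definition red := [set g in rest | reach (ends g).1 && reach (ends g).2].

Definition blue := rest :\: red.

Lemma smoots_sub : smoots \subset Eef e f.
Proof. by apply/subsetP => g; rewrite inE => /and3P[]. Qed.

Lemma smoots_disjoint : [disjoint smoots & gamma].
Proof.
by rewrite disjoint_subset; apply/subsetP => g; rewrite !inE => /and3P[].
Qed.

Lemma red_sub : red \subset rest.
Proof. by apply/subsetP => g; rewrite inE => /andP[]. Qed.

Lemma compatible_smoot_notin (b a : {set E}) g :
  compatible ends e f b gamma a -> smoot ends e f gamma g -> g \notin a.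
Proof.
case/and5P => _ _ _ /and3P[_ split_a _] _ /and3P[_ _ js].
apply: contra split_a => ga; apply: (@joins_same_samecomp _ _ _ _ g).
  by rewrite inE ga orbT.
by apply: joins_same_sub js; apply: subsetUl.
Qed.

Lemma twins_smoots (b a a' : {set E}) :
  twins ends e f b gamma a a' ->
  mmul (mmul (xmon b) (xmon gamma)) (mmul (xmon a) (xmon a')) = xmon (Eef e f) ->
  b = smoots.
Proof.
move=> [ca ca' caa'] /ffunP prod.
have once g :
    (g \in b) + (g \in gamma) + ((g \in a) + (g \in a')) = (g \in Eef e f) :> nat.
  by have := prod g; rewrite !ffunE.
have aa'0 : a :&: a' = set0.
  apply/setP => g; rewrite !inE; have := once g.
  by case: (g \in a); case: (g \in a'); case: (g \in b); case: (g \in gamma);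
    case: (g \in Eef e f).
apply/setP => g; rewrite inE; apply/idP/idP => [gb | sg].
  by case/and5P: caa' => _ _ _ _ /forall_inP/(_ g gb); rewrite aa'0 setU0.
have /and3P[gE ngg _] := sg; have := once g.
rewrite gE (negbTE ngg) (negbTE (compatible_smoot_notin ca sg)).
by rewrite (negbTE (compatible_smoot_notin ca' sg)); case: (g \in b).
Qed.

Hypothesis gamma_paracel : paracel ends e f gamma.

Lemma gamma_sub : gamma \subset Eef e f.
Proof. by case/and3P: gamma_paracel. Qed.

Lemma e_split : ~~ comp1 e2.
Proof. by case/and3P: gamma_paracel. Qed.

Lemma smoots_gamma_rest_xmon :
  mmul (mmul (xmon smoots) (xmon gamma)) (mmul (xmon red) (xmon blue)) =
  xmon (Eef e f).
Proof.
rewrite xmonU ?smoots_disjoint // xmon_subD ?red_sub // xmon_subD //.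
by rewrite subUset smoots_sub gamma_sub.
Qed.

Lemma compatible_sub_rest (a : {set E}) :
  a \subset rest -> ~~ samecomp ends (gamma :|: a) e1 e2 ->
  compatible ends e f smoots gamma a.
Proof.
move=> /subsetP a_rest split_a.
have a_new g : g \in a -> [&& g \in Eef e f, g \notin smoots & g \notin gamma].
  by move/a_rest; rewrite in_setD in_setU negb_or andbC.
apply/and5P; split.
- by apply/subsetP => g /a_new /and3P[].
- by rewrite disjoint_subset; apply/subsetP => g /a_new /and3P[].
- by rewrite disjoint_subset; apply/subsetP => g /a_new /and3P[].
- apply/and3P; split => //.
  + by rewrite subUset gamma_sub; apply/subsetP => g /a_new /and3P[].
  + by case/and3P: gamma_paracel => _ _; apply: joins_same_sub; apply: subsetUl.
- apply/forall_inP => g; rewrite inE => sg; have /and3P[gE ngg js] := sg.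
  rewrite /smoot gE inE negb_or ngg (joins_same_sub (subsetUl _ _) js) andbT /=.
  by apply: contraL sg => /a_new /and3P[_]; rewrite inE.
Qed.

Lemma comp1_not_comp2 v : comp1 v -> ~~ comp2 v.
Proof.
move=> c1v; apply: contra e_split; rewrite samecomp_sym; exact: connect_trans.
Qed.

Lemma reach_not_comp2 v : reach v -> ~~ comp2 v.
Proof.
move=> reach_v; rewrite -(samecomp_closed (P := comp2) _ reach_v).
  by rewrite samecomp_sym e_split.
move=> g /setUP[/samecomp_edge_eq // | ].
by rewrite inE => /and3P[_ /negbTE-> /negbTE->].
Qed.

Lemma red_separates : ~~ samecomp ends (gamma :|: red) e1 e2.
Proof.
have red_closed g : g \in gamma :|: red -> reach (ends g).1 = reach (ends g).2.
  case/setUP => [gg | ]; first by apply: samecomp_edge_eq; rewrite inE gg.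
  by rewrite inE => /and3P[_ -> ->].
apply/negP => /(samecomp_closed red_closed); rewrite /samecomp connect0.
by move/esym/reach_not_comp2; rewrite /samecomp connect0.
Qed.

Lemma rest_touching_comp1_red g :
  g \in rest -> comp1 (ends g).1 || comp1 (ends g).2 -> g \in red.
Proof.
move=> g_rest A_g; have := g_rest; rewrite in_setD in_setU negb_or.
case/andP => /andP[g_nS g_ng] g_Eef.
have B_free : ~~ comp2 (ends g).1 && ~~ comp2 (ends g).2.
  rewrite -negb_or; apply: contra g_nS => B_g.
  rewrite inE /smoot g_Eef g_ng /joins_same.
  move: A_g B_g (introT implyP (@comp1_not_comp2 (ends g).1))
    (introT implyP (@comp1_not_comp2 (ends g).2)).
  rewrite !(samecomp_sym _ _ (ends e).1) !(samecomp_sym _ _ (ends e).2).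
  by case: (samecomp _ gamma (ends g).1 e1); case: (samecomp _ gamma (ends g).2 e1);
     case: (samecomp _ gamma (ends g).1 e2); case: (samecomp _ gamma (ends g).2 e2).
have g_ext : g \in gamma_ext by rewrite in_setU in_set g_rest B_free orbT.
rewrite in_set g_rest -(samecomp_edge_eq ends e1 g_ext) andbb /=.
by case/orP: A_g; [|rewrite (samecomp_edge_eq ends e1 g_ext)];
  apply: samecomp_sub; apply: subsetUl.
Qed.

Lemma blue_avoids_comp1 g :
  g \in blue -> ~~ comp1 (ends g).1 && ~~ comp1 (ends g).2.
Proof.
rewrite inE => /andP[g_nred g_rest]; rewrite -negb_or.
by apply: contra g_nred; apply: rest_touching_comp1_red.
Qed.

Lemma blue_separates : ~~ samecomp ends (gamma :|: blue) e1 e2.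
Proof.
have blue_closed g : g \in gamma :|: blue ->
    comp1 (ends g).1 = comp1 (ends g).2.
  case/setUP => [/samecomp_edge_eq // | /blue_avoids_comp1].
  by case/andP => /negbTE-> /negbTE->.
apply/negP => /(samecomp_closed blue_closed); rewrite /samecomp connect0.
by move/esym; apply/negP; apply: e_split.
Qed.

Lemma smoots_inB : inB ends e f smoots gamma (mmul (xmon red) (xmon blue)).
Proof.
exists red, blue; split => //; split.
- exact: compatible_sub_rest red_sub red_separates.
- exact: compatible_sub_rest (subsetDl _ _) blue_separates.
- rewrite /blue setDE setICA setICr setI0.
  by apply: compatible_sub_rest; rewrite ?sub0set ?setU0 ?e_split.
Qed.

End Proposition.

Theorem proposition4p4 (V E : finType) (ends : E -> V * V) (e f : E)
  (hef : e != f) (gamma : {set E}) (hgamma : paracel ends e f gamma) :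
  exists! p : {set E} * {ffun E -> nat},
    [/\ p.1 \subset Eef e f, [disjoint p.1 & gamma],
        inB ends e f p.1 gamma p.2
      & mmul (mmul (xmon p.1) (xmon gamma)) p.2 = xmon (Eef e f)].
Proof.
(* The argument does not need [hef]. *)
have prod0 := smoots_gamma_rest_xmon hgamma.
exists (smoots ends e f gamma,
        mmul (xmon (red ends e f gamma)) (xmon (blue ends e f gamma))).
split.
  by split; [exact: smoots_sub | exact: smoots_disjoint | exact: smoots_inB |].
move=> [b m] /= [_ _ [a [a' [ab_twins ->]]] prod].
have bE := twins_smoots ab_twins prod; subst b.
congr pair; apply: (@mmulI _ (mmul (xmon (smoots ends e f gamma)) (xmon gamma))).
by rewrite prod prod0.
Qed.
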